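(* Let $\xi$ be a Hausdorff convergence. Then $\xi$ has countable $\mathrm{S}_0$-character if and only if $\mathrm{I}_1\xi$ is a pretopology and $\xi$ is sequential (i.e., $\xi\ge\mathrm{T}\mathrm{I}_1\xi$). Moreover, in this case $\mathrm{I}_1\xi$ is the only pretopology $\sigma$ of countable character satisfying $\sigma\ge\xi\ge\mathrm{T}\sigma$.
   Context: A convergence $\xi$ on a set $X$ is a relation between filters on $X$ and points, written $x\in\lim_\xi\mathcal{F}$, with $\mathcal{F}\le\mathcal{G}\Rightarrow\lim_\xi\mathcal{F}\subset\lim_\xi\mathcal{G}$ and $x\in\lim_\xi\{x\}^\uparrow$. For convergences on the same set, $\xi\ge\theta$ ($\xi$ finer) means $\lim_\xi\mathcal{F}\subset\lim_\theta\mathcal{F}$ for every filter $\mathcal{F}$. $\xi$ is Hausdorff if every filter has at most one limit point. Vicinity filter $\mathcal{V}_\xi(x)$: intersection of all filters converging to $x$; $\xi$ is a pretopology if $x\in\lim_\xi\mathcal{V}_\xi(x)$ for all $x$. A set $O$ is $\xi$-open if $\lim_\xi\mathcal{F}\cap O\ne\emptyset\Rightarrow O\in\mathcal{F}$; $\mathrm{T}\xi$ is the topology of $\xi$-open sets. $\mathrm{I}_1\xi$ is the convergence with $x\in\lim_{\mathrm{I}_1\xi}\mathcal{F}$ iff there is a filter $\mathcal{H}\le\mathcal{F}$ with a countable filter-base and $x\in\lim_\xi\mathcal{H}$; $\xi$ has countable character if $\xi=\mathrm{I}_1\xi$. $\xi$ is sequential if $\xi\ge\mathrm{T}\mathrm{I}_1\xi$.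 $\xi$ has countable $\mathrm{S}_0$-character if there is a pretopology $\sigma$ of countable character on the same set with $\sigma\ge\xi\ge\mathrm{T}\sigma$. *)

Set Implicit Arguments.

Definition subset {X : Type} (A B : X -> Prop) : Prop := forall x, A x -> B x.

Record is_filter {X : Type} (F : (X -> Prop) -> Prop) : Prop := {
  filter_full : F (fun _ => True);
  filter_up : forall A B, subset A B -> F A -> F B;
  filter_inter : forall A B, F A -> F B -> F (fun x => A x /\ B x);
  filter_proper : ~ F (fun _ => False)
}.

Definition filter_le {X : Type} (F G : (X -> Prop) -> Prop) : Prop :=
  forall A, F A -> G A.

Definition principal {X : Type} (x : X) (A : X -> Prop) : Prop := A x.

(* a convergence relation: conv F x  means  x \in lim F *)
Definition Conv (X : Type) := ((X -> Prop) -> Prop) -> X -> Prop.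

Definition is_convergence {X : Type} (xi : Conv X) : Prop :=
  (forall F G x, is_filter F -> is_filter G -> filter_le F G -> xi F x -> xi G x)
  /\ (forall x, xi (principal x) x).

Definition conv_ge {X : Type} (xi theta : Conv X) : Prop :=
  forall F x, is_filter F -> xi F x -> theta F x.

Definition conv_eq {X : Type} (xi theta : Conv X) : Prop :=
  conv_ge xi theta /\ conv_ge theta xi.

Definition hausdorff {X : Type} (xi : Conv X) : Prop :=
  forall F x y, is_filter F -> xi F x -> xi F y -> x = y.

Definition vicinity {X : Type} (xi : Conv X) (x : X) (A : X -> Prop) : Prop :=
  forall F, is_filter F -> xi F x -> F A.

Definition pretopology {X : Type} (xi : Conv X) : Prop :=
  forall x, xi (vicinity xi x) x.

Definition is_open {X : Type} (xi : Conv X) (O : X -> Prop) : Prop :=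
  forall F x, is_filter F -> xi F x -> O x -> F O.

Definition Ttop {X : Type} (xi : Conv X) : Conv X :=
  fun F x => forall O, is_open xi O -> O x -> F O.

Definition countably_based {X : Type} (F : (X -> Prop) -> Prop) : Prop :=
  exists B : nat -> (X -> Prop), forall A, F A <-> exists n, subset (B n) A.

Definition I1 {X : Type} (xi : Conv X) : Conv X :=
  fun F x => exists H, is_filter H /\ filter_le H F /\ countably_based H /\ xi H x.

Definition countable_character {X : Type} (xi : Conv X) : Prop :=
  conv_eq xi (I1 xi).

Definition sequential {X : Type} (xi : Conv X) : Prop :=
  conv_ge xi (Ttop (I1 xi)).

Definition countable_S0_character {X : Type} (xi : Conv X) : Prop :=
  exists sigma : Conv X, is_convergence sigma /\ pretopology sigma /\
    countable_character sigma /\ conv_ge sigma xi /\ conv_ge xi (Ttop sigma).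

From Stdlib Require Import Classical ClassicalEpsilon Lia.

Set Implicit Arguments.

(* If a pretopology sigma of countable character satisfies sigma >= xi >= T sigma,
   then sigma agrees with xi on countably based filters, hence sigma = I1 xi; both
   directions of the equivalence and the uniqueness follow.  Let H be countably based with x in lim_xi H and suppose
   some V in V_sigma(x) is not in H.  Choosing x_n in the n-th basic set of H but
   outside V gives a sequence whose elementary filter still xi-converges to x.
   No point y is a sigma-cluster point of (x_n): otherwise V_sigma(y) and the
   sequence mesh, their supremum xi-converges to y and to x, so y = x, which V
   forbids.  As sigma is a T1 pretopology, the complement of {x_n} is then
   sigma-open; it contains x, so the sequence is eventually in it, which is
   absurd. *)

Section Filters.
Context {X : Type}.

Lemma principal_filter (a : X) : is_filter (principal a).
Proof. split; unfold principal; auto. Qed.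

Lemma principal_countably_based (a : X) : countably_based (principal a).
Proof.
  exists (fun _ z => z = a); intro A; unfold principal; split.
  - intros hA; exists 0; intros z ->; exact hA.
  - intros [_ h]; apply h; reflexivity.
Qed.

Lemma filter_finite_inter (F : (X -> Prop) -> Prop) (A : nat -> X -> Prop) n :
  is_filter F -> (forall i, i < n -> F (A i)) -> F (fun z => forall i, i < n -> A i z).
Proof.
  intros hF; induction n as [|n IH]; intros hA.
  - apply (filter_up hF (A := fun _ => True)); [intros z _ i hi; lia | apply (filter_full hF)].
  - apply (filter_up hF (A := fun z => (forall i, i < n -> A i z) /\ A n z)).
    + intros z [hlt hn] i hi.
      destruct (Compare_dec.le_lt_eq_dec i n) as [lt | ->]; auto; lia.
    + apply (filter_inter hF); auto.
Qed.

Definition seq_filter (xs : nat -> X) (A : X -> Prop) : Prop :=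
  exists N, forall n, N <= n -> A (xs n).

Lemma seq_filter_filter (xs : nat -> X) : is_filter (seq_filter xs).
Proof.
  split; unfold seq_filter.
  - exists 0; auto.
  - intros A B hAB [N hN]; exists N; auto.
  - intros A B [N1 h1] [N2 h2]; exists (max N1 N2); intros n hn; split;
      [apply h1 | apply h2]; lia.
  - intros [N hN]; exact (hN N (le_n N)).
Qed.

Definition filter_sup (F G : (X -> Prop) -> Prop) (A : X -> Prop) : Prop :=
  exists W T, F W /\ G T /\ subset (fun z => W z /\ T z) A.

Lemma filter_sup_filter F G : is_filter F -> is_filter G ->
  (forall W T, F W -> G T -> exists z, W z /\ T z) -> is_filter (filter_sup F G).
Proof.
  intros hF hG hmesh; split; unfold filter_sup.
  - exists (fun _ => True), (fun _ => True).
    repeat split; [apply (filter_full hF) | apply (filter_full hG)].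
  - intros A B hAB (W & T & hW & hT & hWT); exists W, T; repeat split; auto.
    intros z hz; auto.
  - intros A B (W & T & hW & hT & hWT) (W' & T' & hW' & hT' & hWT').
    exists (fun z => W z /\ W' z), (fun z => T z /\ T' z); repeat split.
    + apply (filter_inter hF); auto.
    + apply (filter_inter hG); auto.
    + apply hWT; tauto.
    + apply hWT'; tauto.
  - intros (W & T & hW & hT & hWT).
    destruct (hmesh W T hW hT) as [z hz]; exact (hWT z hz).
Qed.

Lemma filter_le_supl F G : is_filter G -> filter_le F (filter_sup F G).
Proof.
  intros hG A hA; exists A, (fun _ => True); repeat split; auto.
  - apply (filter_full hG).
  - intros z [hz _]; exact hz.
Qed.

Lemma filter_le_supr F G : is_filter F -> filter_le G (filter_sup F G).
Proof.
  intros hF A hA; exists (fun _ => True), A; repeat split; auto.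
  - apply (filter_full hF).
  - intros z [_ hz]; exact hz.
Qed.

Lemma countably_based_not_mem_seq (H : (X -> Prop) -> Prop) (V : X -> Prop) :
  is_filter H -> countably_based H -> ~ H V ->
  exists xs : nat -> X, filter_le H (seq_filter xs) /\ forall n, ~ V (xs n).
Proof.
  intros hH [B hB] hV.
  assert (hBn : forall n, H (B n)) by (intro n; apply hB; exists n; intros z hz; exact hz).
  assert (hpt : forall n, exists z, (forall i, i < S n -> B i z) /\ ~ V z).
  { intro n; apply NNPP; intros hnone; apply hV.
    apply (filter_up hH (A := fun z => forall i, i < S n -> B i z)).
    - intros z hz; apply NNPP; intros hVz; apply hnone; exists z; auto.
    - apply filter_finite_inter; auto. }
  destruct (choice _ hpt) as [xs hxs].
  exists xs; split; [| intro n; apply (hxs n)].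
  intros A hA; apply hB in hA as [k hk]; exists k.
  intros n hn; apply hk, (proj1 (hxs n)); lia.
Qed.

End Filters.

Section Convergence.
Context {X : Type}.

Lemma conv_ge_trans (r s t : Conv X) : conv_ge r s -> conv_ge s t -> conv_ge r t.
Proof. intros hrs hst F x hF hr; auto. Qed.

Lemma hausdorff_ge (s t : Conv X) : conv_ge s t -> hausdorff t -> hausdorff s.
Proof. intros hst ht F x y hF hx hy; apply (ht F); auto. Qed.

Lemma vicinity_ge (s t : Conv X) x : conv_ge s t -> filter_le (vicinity t x) (vicinity s x).
Proof. intros hst A hA F hF hx; exact (hA F hF (hst F x hF hx)). Qed.

Lemma is_open_ge (s t : Conv X) O : conv_ge s t -> is_open t O -> is_open s O.
Proof. intros hst hO F x hF hx; exact (hO F x hF (hst F x hF hx)). Qed.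

Lemma Ttop_ge (s t : Conv X) : conv_ge s t -> conv_ge (Ttop s) (Ttop t).
Proof. intros hst F x hF hx O hO; apply hx, (is_open_ge hst hO). Qed.

Lemma is_open_of_vicinity (s : Conv X) O :
  (forall y, O y -> vicinity s y O) -> is_open s O.
Proof. intros hO F y hF hy hOy; exact (hO y hOy F hF hy). Qed.

Lemma I1_ge (s t : Conv X) : conv_ge s t -> conv_ge (I1 s) (I1 t).
Proof.
  intros hst F x hF (H & hH & hHF & hHc & hx).
  exists H; exact (conj hH (conj hHF (conj hHc (hst H x hH hx)))).
Qed.

Variable s : Conv X.
Hypothesis hs : is_convergence s.

Lemma vicinity_filter x : is_filter (vicinity s x).
Proof.
  split; unfold vicinity.
  - intros F hF _; apply (filter_full hF).
  - intros A B hAB hA F hF hx; exact (filter_up hF hAB (hA F hF hx)).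
  - intros A B hA hB F hF hx; exact (filter_inter hF A B (hA F hF hx) (hB F hF hx)).
  - intros h; exact (h _ (principal_filter x) (proj2 hs x)).
Qed.

Lemma vicinity_point x A : vicinity s x A -> A x.
Proof. intros h; exact (h _ (principal_filter x) (proj2 hs x)). Qed.

Lemma pretopology_conv F x :
  pretopology s -> is_filter F -> filter_le (vicinity s x) F -> s F x.
Proof. intros hpre hF hle; exact (proj1 hs _ F x (vicinity_filter x) hF hle (hpre x)). Qed.

Lemma pretopology_vicinity_neq a y : pretopology s -> hausdorff s -> a <> y ->
  vicinity s y (fun z => a <> z).
Proof.
  intros hpre hH hay; apply NNPP; intros hnot; apply hay.
  assert (hle : filter_le (vicinity s y) (principal a)).
  { intros A hA; apply NNPP; intros hAa; apply hnot.
    apply (filter_up (vicinity_filter y) (A := A)); auto.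
    intros z hz ->; contradiction. }
  apply (hH (principal a)); [apply principal_filter | apply (proj2 hs) |].
  apply pretopology_conv; auto; apply principal_filter.
Qed.

Lemma I1_le : conv_ge (I1 s) s.
Proof. intros F x hF (H & hH & hHF & _ & hx); exact (proj1 hs H F x hH hF hHF hx). Qed.

Lemma seq_range_compl_open (xs : nat -> X) : pretopology s -> hausdorff s ->
  (forall y, exists W N, vicinity s y W /\ forall n, N <= n -> ~ W (xs n)) ->
  is_open s (fun z => forall n, xs n <> z).
Proof.
  intros hpre hH hnoclus; apply is_open_of_vicinity; intros y hy.
  destruct (hnoclus y) as (W & N & hW & hN).
  apply (filter_up (vicinity_filter y) (A := fun z => W z /\ forall n, n < N -> xs n <> z)).
  - intros z [hWz hz] n; destruct (Compare_dec.lt_dec n N) as [lt | ge]; auto.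
    intros <-; apply (hN n); [lia | exact hWz].
  - apply (filter_inter (vicinity_filter y)); auto.
    apply filter_finite_inter; [apply vicinity_filter |].
    intros n _; apply pretopology_vicinity_neq; auto.
Qed.

End Convergence.

Section I1.
Context {X : Type}.
Variable xi : Conv X.
Hypothesis hxi : is_convergence xi.

Lemma I1_convergence : is_convergence (I1 xi).
Proof.
  split.
  - intros F G x hF hG hFG (H & hH & hHF & hHc & hx).
    exists H; exact (conj hH (conj (fun A hA => hFG A (hHF A hA)) (conj hHc hx))).
  - intro x; exists (principal x).
    exact (conj (principal_filter x) (conj (fun A hA => hA)
            (conj (principal_countably_based x) (proj2 hxi x)))).
Qed.

Lemma I1_countable_character : countable_character (I1 xi).
Proof.
  split; [| exact (I1_le I1_convergence)].
  intros F x hF (H & hH & hHF & hHc & hx).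
  exists H; refine (conj hH (conj hHF (conj hHc _))).
  exists H; exact (conj hH (conj (fun A hA => hA) (conj hHc hx))).
Qed.

End I1.

Lemma pretopology_conv_eq {X : Type} (s t : Conv X) :
  is_convergence s -> is_convergence t -> conv_eq s t -> pretopology s -> pretopology t.
Proof.
  intros hs ht [hst hts] hpre x; apply hst; [apply (vicinity_filter ht) |].
  apply (pretopology_conv hs hpre (vicinity_filter ht x)), (vicinity_ge hts).
Qed.

Section Sandwich.
Context {X : Type}.
Variables xi sigma : Conv X.
Hypotheses (hxi : is_convergence xi) (hH : hausdorff xi).
Hypotheses (hsigma : is_convergence sigma) (hpre : pretopology sigma).
Hypotheses (hsigma_xi : conv_ge sigma xi) (hxi_T : conv_ge xi (Ttop sigma)).

Lemma sandwich_no_cluster (xs : nat -> X) x V :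
  xi (seq_filter xs) x -> vicinity sigma x V -> (forall n, ~ V (xs n)) ->
  forall y, exists W N, vicinity sigma y W /\ forall n, N <= n -> ~ W (xs n).
Proof.
  intros hx hV hxsV y; apply NNPP; intros hclus.
  assert (hmesh : forall W T, vicinity sigma y W -> seq_filter xs T -> exists z, W z /\ T z).
  { intros W T hW [N hN]; apply NNPP; intros hdisj; apply hclus.
    exists W, N; split; [exact hW |].
    intros n hn hWn; apply hdisj; exists (xs n); auto. }
  pose (G := filter_sup (vicinity sigma y) (seq_filter xs)).
  assert (hG : is_filter G)
    by (apply filter_sup_filter; [apply (vicinity_filter hsigma) | apply seq_filter_filter | exact hmesh]).
  assert (hGy : xi G y).
  { apply hsigma_xi, (pretopology_conv hsigma hpre hG); [exact hG |].
    apply filter_le_supl, seq_filter_filter. }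
  assert (hGx : xi G x).
  { apply (proj1 hxi _ G x (seq_filter_filter xs) hG); [| exact hx].
    apply filter_le_supr, (vicinity_filter hsigma). }
  pose proof (hH hG hGx hGy) as e; subst y.
  apply (filter_proper hG); apply (filter_up hG (A := fun z => V z /\ ~ V z));
    [intros z [hz hnz]; exact (hnz hz) |].
  apply (filter_inter hG).
  - apply filter_le_supl; [apply seq_filter_filter | exact hV].
  - apply filter_le_supr; [apply (vicinity_filter hsigma) | exists 0; auto].
Qed.

Lemma sandwich_countably_based H x :
  is_filter H -> countably_based H -> xi H x -> sigma H x.
Proof.
  intros hHf hHc hx; apply (pretopology_conv hsigma hpre hHf).
  intros V hV; apply NNPP; intros hHV.
  destruct (countably_based_not_mem_seq V hHf hHc hHV) as (xs & hHxs & hxsV).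
  assert (hxs : xi (seq_filter xs) x)
    by exact (proj1 hxi H _ x hHf (seq_filter_filter xs) hHxs hx).
  assert (hopen : is_open sigma (fun z => forall n, xs n <> z)).
  { apply (seq_range_compl_open hsigma xs hpre (hausdorff_ge hsigma_xi hH)).
    exact (sandwich_no_cluster hxs hV hxsV). }
  assert (hxO : forall n, xs n <> x)
    by (intros n hn; apply (hxsV n); rewrite hn; exact (vicinity_point hsigma hV)).
  destruct (hxi_T (seq_filter_filter xs) hxs hopen hxO) as [N hN].
  exact (hN N (le_n N) N eq_refl).
Qed.

Lemma sandwich_eq_I1 : countable_character sigma -> conv_eq sigma (I1 xi).
Proof.
  intros [hcc _]; split.
  - exact (conv_ge_trans hcc (I1_ge hsigma_xi)).
  - intros F x hF (H & hHf & hHF & hHc & hx).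
    exact (proj1 hsigma H F x hHf hF hHF (sandwich_countably_based hHf hHc hx)).
Qed.

End Sandwich.

Theorem proposition2p7 (X : Type) (xi : Conv X) :
  is_convergence xi -> hausdorff xi ->
  (countable_S0_character xi <-> (pretopology (I1 xi) /\ sequential xi)) /\
  (countable_S0_character xi ->
     forall sigma : Conv X, is_convergence sigma -> pretopology sigma ->
       countable_character sigma -> conv_ge sigma xi -> conv_ge xi (Ttop sigma) ->
       conv_eq sigma (I1 xi)).
Proof.
  intros hxi hH; split; [split |].
  - intros (sigma & hsigma & hpre & hcc & hsigma_xi & hxi_T).
    pose proof (sandwich_eq_I1 hxi hH hsigma hpre hsigma_xi hxi_T hcc) as [hge hle].
    split.
    + exact (pretopology_conv_eq hsigma (I1_convergence hxi) (conj hge hle) hpre).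
    + exact (conv_ge_trans hxi_T (Ttop_ge hge)).
  - intros [hpre hseq]; exists (I1 xi).
    exact (conj (I1_convergence hxi) (conj hpre
            (conj (I1_countable_character hxi) (conj (I1_le hxi) hseq)))).
  - intros _ sigma hsigma hpre hcc hsigma_xi hxi_T.
    exact (sandwich_eq_I1 hxi hH hsigma hpre hsigma_xi hxi_T hcc).
Qed.
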